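(* Let $b\ge1$, $q\ge2$, $n\ge b+1$ and $i\in[1,n-b+1]$. Then \[ |\{\boldsymbol{x}\in\Sigma_q^n: |\mathcal{D}_{1,b}(\boldsymbol{x})|=i\}|=q^b(q-1)^{i-1}\binom{n-b}{i-1}. \]
   Context: $\Sigma_q=\{0,\ldots,q-1\}$. A $b$-burst-deletion at position $i\in[1,n-b+1]$ transforms $x_1\cdots x_n$ into $x_1\cdots x_{i-1}x_{i+b}\cdots x_n$. $\mathcal{D}_{1,b}(\boldsymbol{x})$ is the set of all length-$(n-b)$ sequences obtainable from $\boldsymbol{x}$ by one $b$-burst-deletion. *)

From mathcomp Require Import all_boot.
Set Implicit Arguments. Unset Strict Implicit. Unset Printing Implicit Defensive.

(* Sigma_q = 'I_q; a sequence x in Sigma_q^n is a tuple of length n.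
   burst_del b i x : remove the b symbols x_i .. x_{i+b-1} (1-indexed i),
   i.e. x_1 ... x_{i-1} x_{i+b} ... x_n. *)
Definition burst_del (T : Type) (b i : nat) (x : seq T) : seq T :=
  take i.-1 x ++ drop (i.-1 + b) x.

Definition D1b (T : eqType) (b : nat) (x : seq T) : seq (seq T) :=
  undup [seq burst_del b i x | i <- iota 1 (size x - b + 1)].

From mathcomp Require Import all_boot.
From mathcomp Require Import zify.
Set Implicit Arguments. Unset Strict Implicit. Unset Printing Implicit Defensive.

(* Deleting the b-burst at positions k and k+1 gives the same word exactly when
   x_k = x_{k+b}, and two deletions further apart differ as soon as one of the
   intermediate pairs does, so |D_{1,b}(x)| = 1 + #{k : x_k <> x_{k+b}}.
   Building x from its first b symbols, each later symbol either repeats the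
   one b places earlier (1 way) or creates such a mismatch (q-1 ways); hence
   the words with i-1 mismatches number q^b (q-1)^(i-1) C(n-b, i-1). *)

Lemma size_undup_cons (T : eqType) (u : T) (s : seq T) :
  size (undup (u :: s)) = (u \notin s) + size (undup s).
Proof. by rewrite /=; case: (u \in s). Qed.

Section BurstDeletions.
Variables (T : eqType) (c : nat).
Local Notation b := c.+1.

Definition burst_dels (x : seq T) : seq (seq T) :=
  [seq take k x ++ drop (k + b) x | k <- iota 0 (size x - b).+1].

Definition burst_mismatches (x : seq T) : nat :=
  count (fun p => p.1 != p.2) (zip x (drop b x)).

Lemma D1b_burst_dels (x : seq T) : D1b b x = undup (burst_dels x).
Proof. by rewrite /D1b /burst_dels addn1 -[1]/(1 + 0) iotaDl -map_comp. Qed.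

Lemma burst_dels_cons (a : T) (y : seq T) : b <= size y ->
  burst_dels (a :: y) = drop b (a :: y) :: map (cons a) (burst_dels y).
Proof.
move=> hy; rewrite /burst_dels [size _]/= subSn //.
rewrite -[iota 0 (_ - _).+2]/(0 :: iota (1 + 0) (_ - _).+1) iotaDl map_cons -!map_comp.
by f_equal; apply: eq_map.
Qed.

Lemma burst_mismatches_cons (a : T) (y : seq T) : b <= size y ->
  burst_mismatches (a :: y) = (a != nth a y c) + burst_mismatches y.
Proof. by move=> hy; rewrite /burst_mismatches /= (drop_nth a hy). Qed.

Lemma burst_del_head_mem (a : T) (y : seq T) : b <= size y ->
  (drop b (a :: y) \in map (cons a) (burst_dels y)) = (a == nth a y c).
Proof.
move=> hy; rewrite [drop b _]/= (drop_nth a hy).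
apply/mapP/eqP => [[s _ [-> _]] //|->].
exists (drop b y); last by rewrite (set_nth_default a).
by rewrite /burst_dels; apply/mapP; exists 0; rewrite ?mem_iota add0n ?take0.
Qed.

Lemma size_undup_burst_dels (x : seq T) : b <= size x ->
  size (undup (burst_dels x)) = (burst_mismatches x).+1.
Proof.
elim: x => [|a y IH] // hx; have [hy|hyc] := leqP b (size y).
  rewrite burst_dels_cons // burst_mismatches_cons // size_undup_cons.
  by rewrite burst_del_head_mem // undup_map_inj ?size_map ?IH ?addnS // => u v [].
have sy : size y = c by apply/eqP; rewrite eqn_leq -ltnS hyc.
by rewrite /burst_dels /burst_mismatches /= sy subnn /= drop_oversize ?sy.
Qed.

End BurstDeletions.

Lemma card_set_sum (U : finType) (P : pred U) : #|[set x | P x]| = \sum_x (P x : nat).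
Proof. by rewrite -sum1dep_card big_mkcond; apply: eq_bigr => x _; case: (P x). Qed.

Lemma sum_tuple_cons (T : finType) n (F : n.+1.-tuple T -> nat) :
  \sum_(t : n.+1.-tuple T) F t = \sum_(a : T) \sum_(t : n.-tuple T) F [tuple of a :: t].
Proof.
rewrite pair_big (reindex (fun p : T * n.-tuple T => [tuple of p.1 :: p.2])) /=.
  by apply: eq_bigr => -[a t].
exists (fun t : n.+1.-tuple T => (thead t, [tuple of behead t])).
  by move=> [a t] _ /=; congr (_, _); apply: val_inj.
by move=> t _ /=; rewrite [RHS]tuple_eta.
Qed.

Section CountingMismatches.
Variables (T : finType) (c : nat).
Local Notation b := c.+1.

Definition card_mismatches n j := #|[set x : n.-tuple T | burst_mismatches c x == j]|.

Lemma sum_neq_add (z : T) k j :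
  \sum_(a : T) ((a != z) + k == j : nat) = (k == j) + (#|T| - 1) * (k.+1 == j).
Proof.
rewrite (bigD1 z) //= eqxx add0n; congr (_ + _).
rewrite (eq_bigr (fun _ => (k.+1 == j) : nat)); last by move=> a ->.
by rewrite sum_nat_const cardC1 subn1.
Qed.

Lemma card_mismatchesS n j : b <= n ->
  card_mismatches n.+1 j =
  card_mismatches n j + (#|T| - 1) * (if j is j'.+1 then card_mismatches n j' else 0).
Proof.
move=> hn; rewrite /card_mismatches !card_set_sum sum_tuple_cons exchange_big /=.
under eq_bigr => t _.
  have hc : c < size t by rewrite size_tuple.
  (* make the symbol b places after the new head independent of that head *)
  under eq_bigr => a _ do
    rewrite burst_mismatches_cons // (set_nth_default (tnth t (Ordinal hn)) a hc).
  rewrite sum_neq_add; over.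
rewrite big_split /= -big_distrr /=; congr (_ + _ * _).
case: j => [|j]; first by rewrite big1.
by rewrite card_set_sum; apply: eq_bigr => t _; rewrite eqSS.
Qed.

Lemma card_mismatches_burst j : card_mismatches b j = #|T| ^ b * (j == 0).
Proof.
have no_mismatch (x : b.-tuple T) : burst_mismatches c x = 0.
  by rewrite /burst_mismatches drop_oversize ?size_tuple //; case: x => [[]].
rewrite /card_mismatches -card_tuple.
case: j => [|j] /=; last by apply/eqP; rewrite muln0 cards_eq0 -subset0;
  apply/subsetP => x; rewrite inE no_mismatch.
by rewrite muln1; apply: eq_card => x; rewrite !inE no_mismatch.
Qed.

Lemma card_mismatchesE m j :
  card_mismatches (b + m) j = #|T| ^ b * (#|T| - 1) ^ j * 'C(m, j).
Proof.
elim: m j => [|m IH] [|j].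
- by rewrite addn0 card_mismatches_burst !muln1.
- by rewrite addn0 card_mismatches_burst bin0n !muln0.
- by rewrite addnS card_mismatchesS ?leq_addr // IH !bin0 muln0 addn0.
rewrite addnS card_mismatchesS ?leq_addr // !IH binS (expnS (#|T| - 1)).
by set p := #|T| ^ b; set q := #|T| - 1; nia.
Qed.

End CountingMismatches.

Theorem lemma4p4 (q n b i : nat) :
  1 <= b -> 2 <= q -> b + 1 <= n -> 1 <= i <= n - b + 1 ->
  #|[set x : n.-tuple 'I_q | size (D1b b (x : seq 'I_q)) == i]| =
  q ^ b * (q - 1) ^ (i - 1) * 'C(n - b, i - 1).
Proof.
case: b => [|c] // _ _ hn /andP [hi _].
have hb : c.+1 <= n by lia.
transitivity (card_mismatches 'I_q c n (i - 1)).
  apply: eq_card => x; rewrite !inE D1b_burst_dels size_undup_burst_dels ?size_tuple //.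
  by case: i hi => // i _; rewrite subn1 eqSS.
by rewrite -{1}(subnKC hb) card_mismatchesE card_ord.
Qed.
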